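(* Let PSSPM denote the set of all configurations reachable in the Parallel Symmetric Sand Pile Model from some initial configuration $(\underline{n})$, $n\in\mathbb N$, and SSPM the set of all configurations reachable in the Symmetric Sand Pile Model from some initial configuration $(\underline{n})$, $n \in \mathbb N$. Then PSSPM $\subsetneq$ SSPM.
   Context: A configuration is a sequence $(c_i)_{i\in\mathbb Z}$ of nonnegative integers with only finitely many positive values. For $n\in\mathbb N$, $(\underline{n})$ denotes the configuration with $c_0=n$ and $c_i=0$ for $i\neq 0$. Two local rules act on a column $i$: rule $\mathcal L$ at $i$ is applicable if $c_{i-1}+2\le c_i$ and moves one grain from column $i$ to column $i-1$ ($c_{i-1}\mapsto c_{i-1}+1$, $c_i\mapsto c_i-1$); rule $\mathcal R$ at $i$ is applicable if $c_i\ge c_{i+1}+2$ and moves one grain from column $i$ to column $i+1$. In SSPM, one transition consists of applying exactly once one applicable rule ($\mathcal L$ or $\mathcal R$) at one column. In PSSPM, one transition consists of applying rules simultaneously on every column where some rule is applicable, applying at most one of the two rules on each column (where both are applicable, one of them is chosen). A configuration is reachable in a model from $(\underline{n})$ if it is obtained from $(\underline{n})$ by a finite (possibly empty) sequence of transitions of that model. *)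

From Stdlib Require Import ZArith Relations.
Open Scope Z_scope.

(* A configuration: a sequence (c_i)_{i in Z} of nonnegative integers.
   (Finite support is automatic for configurations reachable from (n).) *)
Definition config := Z -> nat.

Definition finite_support (c : config) : Prop :=
  exists N : Z, forall i, N < Z.abs i -> c i = 0%nat.

Definition single (n : nat) : config :=
  fun i => if Z.eqb i 0 then n else 0%nat.

Definition L_app (c : config) (i : Z) : Prop := Nat.le (Nat.add (c (i - 1)) 2) (c i).
Definition R_app (c : config) (i : Z) : Prop := Nat.le (Nat.add (c (i + 1)) 2) (c i).

Definition move (c : config) (i j : Z) : config :=
  fun k => if Z.eqb k i then Nat.sub (c k) 1
           else if Z.eqb k j then Nat.add (c k) 1 else c k.

Definition SSPM_step (c c' : config) : Prop :=
  exists i, (L_app c i /\ c' = move c i (i - 1))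
         \/ (R_app c i /\ c' = move c i (i + 1)).

Inductive rule := RuleL | RuleR.

Definition PSSPM_step (c c' : config) : Prop :=
  exists ch : Z -> option rule,
    (forall i, ch i = None <-> (~ L_app c i /\ ~ R_app c i)) /\
    (forall i, ch i = Some RuleL -> L_app c i) /\
    (forall i, ch i = Some RuleR -> R_app c i) /\
    (forall i, c' i =
       Nat.add (Nat.add (Nat.sub (c i) (if ch i then 1%nat else 0%nat))
        (match ch (i + 1) with Some RuleL => 1%nat | _ => 0%nat end))
        (match ch (i - 1) with Some RuleR => 1%nat | _ => 0%nat end)).

Definition reachable (step : config -> config -> Prop) (c0 c : config) : Prop :=
  clos_refl_trans config step c0 c.

Definition SSPM_set (c : config) : Prop := exists n, reachable SSPM_step (single n) c.
Definition PSSPM_set (c : config) : Prop := exists n, reachable PSSPM_step (single n) c.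

(* Unimodal configurations (no strict valley) are closed under SSPM moves, since a
   grain only ever moves downhill by at least two.  On a unimodal configuration the
   rules chosen in a parallel step can be fired one at a time from left to right:
   the only way an earlier firing could disable a later one is a rule R at i-2 next
   to a rule L at i, which would make column i-1 a strict valley.  Conversely (1,1,2) is reached from (4) in
   SSPM, but its only parallel predecessor (1,0,3) has a strict valley. *)

From Stdlib Require Import ZArith Relations Lia FunctionalExtensionality.
Open Scope Z_scope.

Definition unimodal (c : config) : Prop :=
  forall j k l, j < k -> k < l -> (c j <= c k)%nat \/ (c l <= c k)%nat.

Definition target (i : Z) (r : rule) : Z :=
  match r with RuleL => i - 1 | RuleR => i + 1 end.

Definition applicable (c : config) (i : Z) (r : rule) : Prop :=
  match r with RuleL => L_app c i | RuleR => R_app c i end.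

Lemma SSPM_step_move c i r : applicable c i r -> SSPM_step c (move c i (target i r)).
Proof. intro H; exists i; destruct r; [left | right]; auto. Qed.

Lemma single_unimodal n : unimodal (single n).
Proof.
  intros j k l Hjk Hkl; unfold single.
  destruct (Z.eqb_spec j 0), (Z.eqb_spec k 0), (Z.eqb_spec l 0); lia.
Qed.

Lemma single_finite_support n : finite_support (single n).
Proof. exists 0; intros i Hi; unfold single; destruct (Z.eqb_spec i 0); lia. Qed.

Lemma move_unimodal c i r :
  unimodal c -> applicable c i r -> unimodal (move c i (target i r)).
Proof.
  intros U Ha j k l Hjk Hkl.
  assert (V : forall a b e, a >= b \/ b >= e \/ (c a <= c b)%nat \/ (c e <= c b)%nat).
  { intros a b e; destruct (Z_lt_le_dec a b), (Z_lt_le_dec b e); try lia.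
    destruct (U a b e); auto. }
  pose proof (V j k l); pose proof (V j (target i r) l);
  pose proof (V i k l); pose proof (V j k i).
  unfold move; destruct r; unfold applicable, L_app, R_app, target in *;
  destruct (Z.eqb_spec k i), (Z.eqb_spec j i), (Z.eqb_spec l i);
  try destruct (Z.eqb_spec k (i-1)); try destruct (Z.eqb_spec j (i-1));
  try destruct (Z.eqb_spec l (i-1));
  try destruct (Z.eqb_spec k (i+1)); try destruct (Z.eqb_spec j (i+1));
  try destruct (Z.eqb_spec l (i+1));
  subst; lia.
Qed.

Lemma move_finite_support c i r :
  finite_support c -> applicable c i r -> finite_support (move c i (target i r)).
Proof.
  intros [N HN] Ha; exists (N + 1); intros k Hk.
  assert (Hi : (2 <= c i)%nat) by (destruct r; unfold applicable, L_app, R_app in Ha; lia).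
  unfold move; destruct (Z.eqb_spec k i).
  - subst; rewrite HN in Hi by lia; lia.
  - destruct (Z.eqb_spec k (target i r)).
    + rewrite HN in Hi by (destruct r; unfold target in *; lia); lia.
    + apply HN; lia.
Qed.

Lemma SSPM_reachable_unimodal n c :
  reachable SSPM_step (single n) c -> unimodal c /\ finite_support c.
Proof.
  intro H; apply clos_rt_rtn1 in H; induction H as [|c' c'' Hstep _ [U F]].
  - split; [apply single_unimodal | apply single_finite_support].
  - destruct Hstep as [i [[Ha ->] | [Ha ->]]].
    + split; [apply (move_unimodal _ _ RuleL) | apply (move_finite_support _ _ RuleL)]; auto.
    + split; [apply (move_unimodal _ _ RuleR) | apply (move_finite_support _ _ RuleR)]; auto.
Qed.

Definition parallel_update (c : config) (ch : Z -> option rule) : config := fun k =>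
  (c k - (if ch k then 1 else 0)
     + match ch (k + 1)%Z with Some RuleL => 1 | _ => 0 end
     + match ch (k - 1)%Z with Some RuleR => 1 | _ => 0 end)%nat.

Definition valid_choice (c : config) (ch : Z -> option rule) : Prop :=
  forall i r, ch i = Some r -> applicable c i r.

Definition prefix (ch : Z -> option rule) (b : Z) : Z -> option rule :=
  fun k => if k <? b then ch k else None.

Definition set_choice (d : Z -> option rule) (i : Z) (x : option rule) :=
  fun k => if k =? i then x else d k.

Lemma parallel_update_none c : parallel_update c (fun _ => None) = c.
Proof. extensionality k; unfold parallel_update; lia. Qed.

Lemma parallel_update_set c d i r : d i = None -> (1 <= c i)%nat ->
  parallel_update c (set_choice d i (Some r)) = move (parallel_update c d) i (target i r).
Proof.
  intros Hdi Hci; extensionality k; unfold parallel_update, set_choice, move.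
  destruct r; unfold target;
  destruct (Z.eqb_spec k i), (Z.eqb_spec (k + 1) i), (Z.eqb_spec (k - 1) i);
  try destruct (Z.eqb_spec k (i - 1)); try destruct (Z.eqb_spec k (i + 1)); try lia;
  repeat match goal with H : _ = i |- _ => rewrite H in *; clear H end;
  rewrite ?Hdi;
  repeat match goal with |- context [d ?x] => destruct (d x) as [[|]|] end; lia.
Qed.

Lemma prefix_succ ch b : prefix ch (b + 1) = set_choice (prefix ch b) b (ch b).
Proof.
  extensionality k; unfold prefix, set_choice.
  destruct (Z.eqb_spec k b), (Z.ltb_spec k (b + 1)), (Z.ltb_spec k b); subst; auto; lia.
Qed.

Section Sequentialization.

Variables (c : config) (ch : Z -> option rule).
Hypotheses (Hc : unimodal c) (Hch : valid_choice c ch).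

Lemma prefix_applicable i r :
  ch i = Some r -> applicable (parallel_update c (prefix ch i)) i r.
Proof.
  intro Hi; pose proof (Hch i r Hi) as Ha.
  unfold applicable, L_app, R_app, parallel_update, prefix in *.
  replace (i - 1 + 1) with i by ring; replace (i + 1 - 1) with i by ring.
  rewrite Z.ltb_irrefl; destruct r.
  - replace (i - 1 - 1) with (i - 2) by ring.
    destruct (Z.ltb_spec (i - 1) i), (Z.ltb_spec (i - 2) i), (Z.ltb_spec (i + 1) i);
      try lia.
    destruct (ch (i - 2)) as [[|]|] eqn:E2.
    + destruct (ch (i - 1)) as [[|]|]; lia.
    + (* a rule R at i-2 together with the rule L at i would make i-1 a strict valley *)
      pose proof (Hch _ _ E2) as R2; unfold applicable, R_app in R2.
      replace (i - 2 + 1) with (i - 1) in R2 by ring.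
      destruct (Hc (i - 2) (i - 1) i); lia.
    + destruct (ch (i - 1)) as [[|]|]; lia.
  - destruct (Z.ltb_spec (i + 1) i), (Z.ltb_spec (i + 1 + 1) i); lia.
Qed.

Lemma prefix_reachable a m :
  reachable SSPM_step (parallel_update c (prefix ch a))
    (parallel_update c (prefix ch (a + Z.of_nat m))).
Proof.
  induction m as [|m IH].
  - rewrite Z.add_0_r; apply rt_refl.
  - eapply rt_trans; [exact IH |].
    set (b := a + Z.of_nat m).
    replace (a + Z.of_nat (S m)) with (b + 1) by (unfold b; lia).
    rewrite prefix_succ.
    assert (Hb : prefix ch b b = None) by (unfold prefix; now rewrite Z.ltb_irrefl).
    destruct (ch b) as [r|] eqn:Er.
    + assert (Hcb : (1 <= c b)%nat).
      { pose proof (Hch _ _ Er) as Ha; destruct r; unfold applicable, L_app, R_app in Ha;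
          lia. }
      rewrite parallel_update_set by assumption.
      apply rt_step, SSPM_step_move, prefix_applicable, Er.
    + replace (set_choice (prefix ch b) b None) with (prefix ch b); [apply rt_refl |].
      extensionality k; unfold set_choice; destruct (Z.eqb_spec k b); subst; auto.
Qed.

End Sequentialization.

Lemma PSSPM_step_SSPM_reachable c c' :
  unimodal c -> finite_support c -> PSSPM_step c c' -> reachable SSPM_step c c'.
Proof.
  intros U [N HN] [ch [Hnone [HL [HR Hc']]]].
  assert (Hvalid : valid_choice c ch) by (intros i [|] Hi; [apply HL | apply HR]; exact Hi).
  assert (Hout : forall k, Z.abs N < Z.abs k -> ch k = None).
  { intros k Hk; apply Hnone; unfold L_app, R_app; rewrite (HN k) by lia; lia. }
  set (a := - Z.abs N - 1).
  assert (Hlow : prefix ch a = fun _ => None).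
  { extensionality k; unfold prefix; destruct (Z.ltb_spec k a); auto; apply Hout; lia. }
  assert (Hfull : prefix ch (a + Z.of_nat (Z.to_nat (2 * Z.abs N + 2))) = ch).
  { extensionality k; unfold prefix; rewrite Z2Nat.id by lia.
    destruct (Z.ltb_spec k (a + (2 * Z.abs N + 2))); auto; symmetry; apply Hout; lia. }
  replace c' with (parallel_update c ch) by (extensionality k; now rewrite Hc').
  rewrite <- Hfull; rewrite <- (parallel_update_none c) at 1; rewrite <- Hlow.
  now apply prefix_reachable.
Qed.

Lemma PSSPM_reachable_SSPM_reachable n c :
  reachable PSSPM_step (single n) c -> reachable SSPM_step (single n) c.
Proof.
  intro H; apply clos_rt_rtn1 in H; induction H as [|c' c'' Hstep _ IH].
  - apply rt_refl.
  - eapply rt_trans; [exact IH |].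
    destruct (SSPM_reachable_unimodal n c' IH) as [U F].
    now apply PSSPM_step_SSPM_reachable.
Qed.

Definition c112 : config := fun k =>
  if k =? -2 then 1%nat else if k =? -1 then 1%nat else if k =? 0 then 2%nat else 0%nat.

Lemma c112_SSPM_reachable : reachable SSPM_step (single 4) c112.
Proof.
  set (c1 := move (single 4) 0 (target 0 RuleL)).
  set (c2 := move c1 0 (target 0 RuleL)).
  apply rt_trans with c1; [apply rt_step, SSPM_step_move; cbv; lia |].
  apply rt_trans with c2; [apply rt_step, SSPM_step_move; cbv; lia |].
  replace c112 with (move c2 (-1) (target (-1) RuleL));
    [apply rt_step, SSPM_step_move; cbv; lia |].
  extensionality k; unfold c112, c2, c1, move, single, target.
  repeat match goal with |- context [Z.eqb ?a ?b] => destruct (Z.eqb_spec a b) end; lia.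
Qed.

Lemma choice_cases p ch k :
  (forall i, ch i = None <-> (~ L_app p i /\ ~ R_app p i)) -> valid_choice p ch ->
  (ch k = None /\ (p (k - 1)%Z + 2 > p k)%nat /\ (p (k + 1)%Z + 2 > p k)%nat) \/
  (ch k = Some RuleL /\ (p (k - 1)%Z + 2 <= p k)%nat) \/
  (ch k = Some RuleR /\ (p (k + 1)%Z + 2 <= p k)%nat).
Proof.
  intros Hnone Hvalid; destruct (ch k) as [r|] eqn:E.
  - right; specialize (Hvalid _ _ E); destruct r; [left | right]; split; auto.
  - left; apply Hnone in E; unfold L_app, R_app in E; split; [reflexivity | lia].
Qed.

Lemma PSSPM_step_into_c112 p :
  PSSPM_step p c112 -> p (-2) = 1%nat /\ p (-1) = 0%nat /\ p 0 = 3%nat.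
Proof.
  intros [ch [Hnone [HL [HR Hp]]]].
  assert (Hvalid : valid_choice p ch) by (intros i [|] Hi; [apply HL | apply HR]; exact Hi).
  pose proof (Hp (-3)); pose proof (Hp (-2)); pose proof (Hp (-1));
  pose proof (Hp 0); pose proof (Hp 1).
  pose proof (choice_cases p ch (-3) Hnone Hvalid) as C3;
  pose proof (choice_cases p ch (-2) Hnone Hvalid) as C2;
  pose proof (choice_cases p ch (-1) Hnone Hvalid) as C1;
  pose proof (choice_cases p ch 0 Hnone Hvalid) as C0;
  pose proof (choice_cases p ch 1 Hnone Hvalid) as Cp.
  clear Hnone HL HR Hp Hvalid; cbv [c112] in *; simpl in *.
  destruct (match ch (-4) with Some RuleR => 1%nat | _ => 0%nat end),
    (match ch 2 with Some RuleL => 1%nat | _ => 0%nat end);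
  destruct C3 as [[E ?]|[[E ?]|[E ?]]]; rewrite E in *;
  destruct C2 as [[E' ?]|[[E' ?]|[E' ?]]]; rewrite E' in *;
  destruct C1 as [[E'' ?]|[[E'' ?]|[E'' ?]]]; rewrite E'' in *;
  destruct C0 as [[F ?]|[[F ?]|[F ?]]]; rewrite F in *;
  destruct Cp as [[F' ?]|[[F' ?]|[F' ?]]]; rewrite F' in *; lia.
Qed.

Lemma c112_not_PSSPM_reachable n : ~ reachable PSSPM_step (single n) c112.
Proof.
  intro H; apply clos_rt_rtn1 in H; inversion H as [Hsingle | p ? Hstep Hp]; subst.
  - apply (f_equal (fun c => c (-2))) in Hsingle; discriminate.
  - apply clos_rtn1_rt, PSSPM_reachable_SSPM_reachable, SSPM_reachable_unimodal in Hp.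
    destruct Hp as [U _].
    destruct (PSSPM_step_into_c112 p Hstep) as [Hm2 [Hm1 H0]].
    destruct (U (-2) (-1) 0); lia.
Qed.

Theorem proposition1 :
  (forall c : config, PSSPM_set c -> SSPM_set c) /\
  (exists c : config, SSPM_set c /\ ~ PSSPM_set c).
Proof.
  split.
  - intros c [n H]; exists n; now apply PSSPM_reachable_SSPM_reachable.
  - exists c112; split.
    + exists 4%nat; exact c112_SSPM_reachable.
    + intros [n H]; exact (c112_not_PSSPM_reachable n H).
Qed.
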